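(* Let $T$ be a well-formed trace satisfying the initial-write property. Then $\mathcal{P}(T) \subseteq \mathcal{P}_{PWR}(T)$; that is, every predictable data race pair $(e,f)$ of $T$ is a potential Lockset-PWR data race pair or a potential Lockset-PWR WRD data race pair of $T$.
   Context: Traces. A trace $T$ is a finite sequence of pairwise distinct events. Each event $e$ belongs to a thread $\mathrm{tid}(e)$ and is one of: a read $r(x)$ or write $w(x)$ of a shared variable $x$, or an acquire $acq(y)$ or release $rel(y)$ of a lock $y$. $\mathrm{pos}_T(e)$ is the index of $e$ in $T$. The projection of $T$ onto thread $i$ is the subsequence of events of thread $i$. $T$ is well-formed if a thread only acquires a lock not currently held and every release $rel(y)$ in thread $i$ has a matching earlier acquire $acq(y)$ in thread $i$ with no other acquire on $y$ in between. A critical section $CS$ on lock $y$ consists of a matching acquire/release pair $acq(CS)$, $rel(CS)$ in thread $i$ together with the events of thread $i$ between them; we write $e \in CS$. The lockset $LS(e)$ of an event $e$ is the set of locks $y$ such that $e$ belongs to some critical section on $y$. Two events are conflicting if they are reads/writes on the same variable, at least one is a write, and they belong to different threads. For a read $e$ on $x$, a write $f$ on $x$ is the last write of $e$ w.r.t. $T$ if $f$ precedes $e$ in $T$ and no other write on $x$ lies strictly between them. $T$ satisfies the initial-write property if every read on $x$ is preceded in $T$ by some write on $x$. Correct reordering. $T'$ is a correctly reordered prefix of $T$ if $T'$ is a sequence of some of the events of $T$ such that: (i) for every thread $i$, the projection of $T'$ onto $i$ is a prefix of the projection of $T$ onto $i$; (ii) for every read $e$ in $T'$ whose last write w.r.t.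 $T$ is $f$, $f$ is in $T'$ and is also the last write of $e$ w.r.t. $T'$; (iii) for any two acquires $e_1,e_2$ on the same lock with $e_1$ before $e_2$ in $T'$, the matching release of $e_1$ is in $T'$ and lies strictly between $e_1$ and $e_2$. Predictable races. $(e,f)$ is a predictable data race pair of $T$ if $e,f$ are conflicting events of $T$ and there is a correctly reordered prefix $T'$ of $T$ in which $e$ appears immediately before $f$; if both are writes we additionally require $\mathrm{pos}_T(e)<\mathrm{pos}_T(f)$. $\mathcal{P}(T)$ denotes the set of all such pairs. PWR relation. $<^{PWR}$ is the smallest strict partial order on the events of $T$ such that: (PO) if $\mathrm{tid}(e)=\mathrm{tid}(f)$ and $\mathrm{pos}_T(e)<\mathrm{pos}_T(f)$ then $e<^{PWR}f$; (WRD) if the write $w$ is the last write w.r.t. $T$ of the read $r$ then $w<^{PWR}r$; (ROD) if $CS, CS'$ are distinct critical sections on the same lock, $e\in CS$, $f\in CS'$ and $e<^{PWR}f$, then $rel(CS)<^{PWR}f$. Potential pairs. $(e,f)$ is a potential Lockset-PWR data race pair if $e,f$ are conflicting, $LS(e)\cap LS(f)=\emptyset$, neither $e<^{PWR}f$ nor $f<^{PWR}e$, and either both are writes or $e$ is a read and $f$ a write. $(e,f)$ is a potential Lockset-PWR WRD data race pair if $e,f$ are conflicting, $e$ is a write, $f$ is a read, $LS(e)\cap LS(f)=\emptyset$, $e<^{PWR}f$, and there is no event $g$ with $e<^{PWR}g<^{PWR}f$. $\mathcal{P}_{PWR}(T)$ is the set of all pairs of either kind. *)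

From mathcomp Require Import all_boot.
Set Implicit Arguments. Unset Strict Implicit. Unset Printing Implicit Defensive.

Inductive action :=
| Read of nat | Write of nat | Acquire of nat | Release of nat.

Section Traces.
Variables (E : eqType) (tid : E -> nat) (act : E -> action).

Definition is_read (x : nat) (e : E) : Prop := act e = Read x.
Definition is_write (x : nat) (e : E) : Prop := act e = Write x.
Definition is_acq (y : nat) (e : E) : Prop := act e = Acquire y.
Definition is_rel (y : nat) (e : E) : Prop := act e = Release y.
Definition is_access (x : nat) (e : E) : Prop := is_read x e \/ is_write x e.
Definition lock_event (y : nat) (e : E) : Prop := is_acq y e \/ is_rel y e.
Definition is_a_write (e : E) : Prop := exists x, is_write x e.
Definition is_a_read (e : E) : Prop := exists x, is_read x e.

Definition pos (T : seq E) (e : E) : nat := index e T.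

Definition held_by (y : nat) (i : nat) (s : seq E) : Prop :=
  exists s1 a s2, s = s1 ++ a :: s2 /\ is_acq y a /\ tid a = i /\
    forall b, b \in s2 -> ~ lock_event y b.

Definition held (y : nat) (s : seq E) : Prop := exists i, held_by y i s.

Definition well_formed (T : seq E) : Prop :=
  uniq T /\
  forall s1 e s2, T = s1 ++ e :: s2 ->
    (forall y, is_acq y e -> ~ held y s1) /\
    (forall y, is_rel y e -> held_by y (tid e) s1).

Definition matches (T : seq E) (a r : E) : Prop :=
  tid a = tid r /\
  exists y, is_acq y a /\ is_rel y r /\
    exists s1 s2 s3, T = s1 ++ a :: s2 ++ r :: s3 /\
      forall b, b \in s2 -> ~ is_rel y b.

Definition in_CS (T : seq E) (a r e : E) : Prop :=
  matches T a r /\ e \in T /\ tid e = tid a /\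
  pos T a <= pos T e /\ pos T e <= pos T r.

Definition in_LS (T : seq E) (y : nat) (e : E) : Prop :=
  exists a r, is_acq y a /\ in_CS T a r e.

Definition last_write (s : seq E) (w r : E) : Prop :=
  exists x, is_read x r /\ is_write x w /\
    exists s1 s2 s3, s = s1 ++ w :: s2 ++ r :: s3 /\
      forall b, b \in s2 -> ~ is_write x b.

Definition initial_write (T : seq E) : Prop :=
  forall s1 r s2 x, T = s1 ++ r :: s2 -> is_read x r ->
    exists w, w \in s1 /\ is_write x w.

Definition conflicting (e f : E) : Prop :=
  tid e <> tid f /\
  exists x, (is_write x e /\ is_access x f) \/ (is_access x e /\ is_write x f).

Definition correct_reordering (T T' : seq E) : Prop :=
  (forall e, e \in T' -> e \in T) /\
  (forall i, prefix [seq e <- T' | tid e == i] [seq e <- T | tid e == i]) /\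
  (forall r w, r \in T' -> last_write T w r -> last_write T' w r) /\
  (forall y e1 e2 s1 s2 s3, T' = s1 ++ e1 :: s2 ++ e2 :: s3 ->
     is_acq y e1 -> is_acq y e2 ->
     exists r, matches T e1 r /\ r \in s2).

Definition predictable_race (T : seq E) (e f : E) : Prop :=
  e \in T /\ f \in T /\ conflicting e f /\
  (exists T', correct_reordering T T' /\ exists s1 s2, T' = s1 ++ e :: f :: s2) /\
  (is_a_write e -> is_a_write f -> pos T e < pos T f).

Inductive pwr (T : seq E) : E -> E -> Prop :=
| pwr_PO e f : e \in T -> f \in T -> tid e = tid f -> pos T e < pos T f ->
    pwr T e f
| pwr_WRD w r : last_write T w r -> pwr T w r
| pwr_ROD y a r a' r' e f :
    is_acq y a -> is_acq y a' -> (a, r) <> (a', r') ->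
    in_CS T a r e -> in_CS T a' r' f -> pwr T e f -> pwr T r f
| pwr_trans e g f : pwr T e g -> pwr T g f -> pwr T e f.

Definition LS_disjoint (T : seq E) (e f : E) : Prop :=
  forall y, in_LS T y e -> in_LS T y f -> False.

Definition potential_race (T : seq E) (e f : E) : Prop :=
  conflicting e f /\ LS_disjoint T e f /\ ~ pwr T e f /\ ~ pwr T f e /\
  ((is_a_write e /\ is_a_write f) \/ (is_a_read e /\ is_a_write f)).

Definition potential_WRD_race (T : seq E) (e f : E) : Prop :=
  conflicting e f /\ is_a_write e /\ is_a_read f /\ LS_disjoint T e f /\
  pwr T e f /\ ~ (exists g, pwr T e g /\ pwr T g f).

Definition PWR_race (T : seq E) (e f : E) : Prop :=
  potential_race T e f \/ potential_WRD_race T e f.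

End Traces.

From mathcomp Require Import all_boot zify.
From Stdlib Require Import Classical.
Set Implicit Arguments. Unset Strict Implicit.

(* Let (e, f) be a predictable race, witnessed by a correctly reordered
   prefix T' = s1 ++ e :: f :: s2 of T.  The heart of the proof is the
   soundness of PWR with respect to correct reorderings (lemma
   [pwr_sound]): if e <PWR f and f occurs in T', then e occurs strictly
   before f in T'.  Program order is preserved thread by thread, last
   writes are preserved by condition (ii), and the ROD rule is sound
   because two critical sections on the same lock cannot overlap in T'
   (condition (iii), lemma [cs_disjoint]).

   Since e and f are adjacent in T', soundness rules out f <PWR e and any
   g with e <PWR g <PWR f, and the non-overlap of critical sections gives
   disjoint locksets.  If f is a write, an edge e <PWR f can then only come
   from PO, WRD or ROD, all excluded since e is a non-release access of
   another thread and f is not a read: (e, f) is a potential race.  If f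
   is a read, e is a write; the last write of f in T (it exists by the
   initial-write property) is also the last write of f in T', hence it is
   e, and (e, f) is a potential WRD race. *)

Section SeqFacts.
Variable E : eqType.
Implicit Types (s : seq E) (x y z : E).

Lemma pivot_notin_prefix s1 s2 x : uniq (s1 ++ x :: s2) -> x \notin s1.
Proof.
rewrite cat_uniq => /and3P [_ Hx _]; apply: contra Hx => xs1.
by apply/hasP; exists x; rewrite ?mem_head.
Qed.

Lemma index_pivot_uniq s s1 s2 x :
  uniq s -> s = s1 ++ x :: s2 -> index x s = size s1.
Proof. by move=> Us Hs; subst s; rewrite index_pivot // (pivot_notin_prefix Us). Qed.

Lemma index_pivot2 s s1 s2 s3 x z :
  uniq s -> s = s1 ++ x :: s2 ++ z :: s3 ->
  [/\ x \in s, z \in s & index x s < index z s].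
Proof.
move=> Us Hs.
have ix := index_pivot_uniq Us Hs.
have iz : index z s = size (s1 ++ x :: s2).
  by apply: (index_pivot_uniq (s2 := s3) Us); rewrite Hs -catA.
rewrite ix iz size_cat /= Hs !(mem_cat, inE) !eqxx !orbT; split=> //; lia.
Qed.

Lemma split2_index s x z : uniq s -> x \in s -> z \in s ->
  index x s < index z s -> exists s1 s2 s3, s = s1 ++ x :: s2 ++ z :: s3.
Proof.
move=> Us xs zs; case/splitPr: xs Us zs => p1 p2 Us.
have nx := pivot_notin_prefix Us.
rewrite mem_cat inE => /orP [zp1|/orP [/eqP zx|zp2]].
- rewrite index_cat (negbTE nx) index_cat zp1 /= eqxx addn0.
  move=> lt; have := index_mem z p1; rewrite zp1; lia.
- by subst; rewrite ltnn.
- by move=> _; case/splitPr: zp2 Us => q1 q2 _; exists p1, q1, q2.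
Qed.

Lemma index_inj s x y : x \in s -> y \in s -> index x s = index y s -> x = y.
Proof. by move=> xs ys Hi; rewrite -(nth_index x xs) -(nth_index x ys) Hi. Qed.

Lemma first_split_uniq (P : E -> Prop) s1 s2 t1 t2 x z :
  s1 ++ x :: s2 = t1 ++ z :: t2 -> P x -> P z ->
  (forall b, b \in s1 -> ~ P b) -> (forall b, b \in t1 -> ~ P b) ->
  [/\ s1 = t1, x = z & s2 = t2].
Proof.
elim: s1 t1 => [|b s1 IH] [|c t1] /=.
- by case=> -> ->.
- by case=> Hxc _ Px _ _ Nt; case: (Nt c (mem_head _ _)); rewrite -Hxc.
- by case=> Hbz _ _ Pz Ns _; case: (Ns b (mem_head _ _)); rewrite Hbz.
- case=> <- Hs Px Pz Ns Nt.
  have [-> -> ->] := IH t1 Hs Px Pz (fun b' Hb => Ns b' (mem_behead (s := b :: _) Hb))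
    (fun b' Hb => Nt b' (mem_behead (s := b :: _) Hb)).
  by [].
Qed.

Lemma index_filter_leq (a : pred E) s x y : a x -> a y -> x \in s -> y \in s ->
  (index x (filter a s) <= index y (filter a s)) = (index x s <= index y s).
Proof.
move=> ax ay; elim: s => [|z s IH] //=; rewrite !inE.
case az: (a z) => /=.
- case: (eqVneq z x) => [<-|zx]; case: (eqVneq z y) => [<-|zy]; rewrite ?eqxx //=;
    by rewrite (eq_sym y) (negbTE zy).
- have zx : z != x by apply: contraFneq az => ->.
  have zy : z != y by apply: contraFneq az => ->.
  rewrite (eq_sym x) (eq_sym y) (negbTE zx) (negbTE zy) /= ltnS; exact: IH.
Qed.

Lemma uniq_from_fibres (g : E -> nat) s :
  (forall i, uniq [seq e <- s | g e == i]) -> uniq s.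
Proof.
elim: s => [|z s IH] //= Hf; apply/andP; split.
- have := Hf (g z); rewrite /= eqxx /= => /andP [Hn _].
  by apply: contra Hn => zs; rewrite mem_filter eqxx.
- by apply: IH => i; have := Hf i; rewrite /=; case: (g z == i) => //= /andP [].
Qed.

Lemma last_split (P : E -> Prop) s : (exists w, w \in s /\ P w) ->
  exists s1 w s2, s = s1 ++ w :: s2 /\ P w /\ forall b, b \in s2 -> ~ P b.
Proof.
elim/last_ind: s => [|s c IH] [w [ws Pw]]; first by rewrite in_nil in ws.
case: (classic (P c)) => [Pc|nPc]; first by exists s, c, [::]; rewrite cats1.
have [|s1 [w' [s2 [-> [Pw' N]]]]] := IH.
  by move: ws; rewrite mem_rcons inE => /orP [/eqP wc|]; [subst w | exists w].
exists s1, w', (rcons s2 c); rewrite rcons_cat /=; split=> //; split=> // b.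
by rewrite mem_rcons inE => /orP [/eqP ->|/N].
Qed.

End SeqFacts.

Section Reordering.
Variables (E : eqType) (tid : E -> nat) (act : E -> action) (T T' : seq E).
Hypothesis uniq_T : uniq T.
Hypothesis reorder : correct_reordering tid act T T'.

Lemma matches_unique a r1 r2 :
  matches tid act T a r1 -> matches tid act T a r2 -> r1 = r2.
Proof.
case=> _ [y [ay [ry1 [s1 [s2 [s3 [HT1 N1]]]]]]].
case=> _ [y' [ay' [ry2 [t1 [t2 [t3 [HT2 N2]]]]]]].
have eq_yy' : y = y' by move: ay ay'; rewrite /is_acq => -> [].
subst y'.
have notin_pre (u v : seq E) : T = u ++ a :: v -> forall b, b \in u -> b <> a.
  move=> HT b bu ba; have := uniq_T; rewrite HT => /pivot_notin_prefix.
  by rewrite -ba bu.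
have [_ _ Hsuffix] := first_split_uniq (P := eq^~ a) (etrans (esym HT1) HT2)
  erefl erefl (notin_pre _ _ HT1) (notin_pre _ _ HT2).
by have [_ -> _] := first_split_uniq Hsuffix ry1 ry2 N1 N2.
Qed.

Lemma matches_mem a r : matches tid act T a r -> a \in T /\ r \in T.
Proof.
case=> _ [y [_ [_ [s1 [s2 [s3 [-> _]]]]]]].
by rewrite !(mem_cat, inE) !eqxx !orbT.
Qed.

(* T' has no repetition, as its thread projections are prefixes of those of T. *)
Lemma reordering_uniq : uniq T'.
Proof.
case: reorder => _ [pre _]; apply: (uniq_from_fibres (g := tid)) => i.
case/prefixP: (pre i) => u Hu.
by move: (filter_uniq (fun e => tid e == i) uniq_T); rewrite Hu cat_uniq => /andP [].
Qed.

(* Condition (i): T' is downward closed for program order, which it keeps. *)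
Lemma reordering_po_leq x y : tid x = tid y -> x \in T -> y \in T' ->
  index x T <= index y T -> x \in T' /\ index x T' <= index y T'.
Proof.
case: reorder => sub [pre _] Hxy xT yT' le_xy.
have yT := sub y yT'.
set a := fun e => tid e == tid y.
have ax : a x by rewrite /a /= Hxy.
have ay : a y by rewrite /a /=.
case/prefixP: (pre (tid y)) => u Hu.
have yf : y \in filter a T' by rewrite mem_filter ay.
move: le_xy; rewrite -(index_filter_leq ax ay xT yT) Hu !index_cat yf.
case xf: (x \in filter a T').
- have xT' : x \in T' by move: xf; rewrite mem_filter => /andP [].
  by rewrite (index_filter_leq ax ay xT' yT').
- by have := index_mem y (filter a T'); rewrite yf /a; lia.
Qed.

Lemma reordering_po_lt x y : tid x = tid y -> x \in T -> y \in T' ->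
  index x T < index y T -> x \in T' /\ index x T' < index y T'.
Proof.
move=> Hxy xT yT' lt_xy.
have [xT' le_xy] := reordering_po_leq Hxy xT yT' (ltnW lt_xy).
split=> //; rewrite ltn_neqAle le_xy andbT.
by apply: contraTneq lt_xy => /(index_inj xT' yT') ->; rewrite ltnn.
Qed.

Lemma cs_acq_before a r e : in_CS tid act T a r e -> e \in T' ->
  a \in T' /\ index a T' <= index e T'.
Proof.
case=> M [eT [Hte [le_ae _]]] eT'.
by apply: reordering_po_leq => //; case: (matches_mem M).
Qed.

Lemma cs_rel_after a r e : in_CS tid act T a r e -> r \in T' ->
  e \in T' /\ index e T' <= index r T'.
Proof.
case=> M [eT [Hte [_ le_er]]] rT'.
by apply: reordering_po_leq => //; rewrite Hte; case: M.
Qed.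

Lemma acq_separated y a a' : is_acq act y a -> is_acq act y a' ->
  a \in T' -> a' \in T' -> index a T' < index a' T' ->
  exists r, [/\ matches tid act T a r, r \in T' & index r T' < index a' T'].
Proof.
move=> ay ay' aT' a'T' lt_aa'.
have [s1 [s2 [s3 HT']]] := split2_index reordering_uniq aT' a'T' lt_aa'.
case: reorder => _ [_ [_ sep]].
have [r [M rs2]] := sep y a a' s1 s2 s3 HT' ay ay'.
exists r; case/splitPr: rs2 HT' => u v HT'.
have HT'r : T' = (s1 ++ a :: u) ++ r :: v ++ a' :: s3 by rewrite HT' -catA /= -catA.
by have [rT' _ lt_ra'] := index_pivot2 reordering_uniq HT'r.
Qed.

Lemma cs_disjoint y a r e a' r' f : is_acq act y a -> is_acq act y a' -> a <> a' ->
  in_CS tid act T a r e -> in_CS tid act T a' r' f -> e \in T' -> f \in T' ->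
  (r \in T' /\ index r T' < index a' T') \/ (r' \in T' /\ index r' T' < index a T').
Proof.
move=> ay ay' neq_aa' Ce Cf eT' fT'.
have [aT' _] := cs_acq_before Ce eT'.
have [a'T' _] := cs_acq_before Cf fT'.
case: (ltngtP (index a T') (index a' T')) => [lt|lt|eq_idx].
- have [r0 [M r0T' lt0]] := acq_separated ay ay' aT' a'T' lt.
  by left; rewrite -(matches_unique M (proj1 Ce)).
- have [r0 [M r0T' lt0]] := acq_separated ay' ay a'T' aT' lt.
  by right; rewrite -(matches_unique M (proj1 Cf)).
- by case: neq_aa'; apply: index_inj aT' a'T' eq_idx.
Qed.

Lemma pwr_sound e f : pwr tid act T e f -> f \in T' ->
  e \in T' /\ index e T' < index f T'.
Proof.
elim=> {e f}.
- by move=> e f eT fT Htid lt fT'; apply: reordering_po_lt.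
- move=> w r LW rT'; case: reorder => _ [_ [keep_lw _]].
  have [x [_ [_ [s1 [s2 [s3 [HT' _]]]]]]] := keep_lw r w rT' LW.
  by have [] := index_pivot2 reordering_uniq HT'.
- move=> y a r a' r' e f ay ay' neq Ce Cf _ IH fT'.
  have [eT' lt_ef] := IH fT'.
  have neq_aa' : a <> a'.
    by move=> eq_aa'; subst a'; apply: neq; rewrite (matches_unique (proj1 Ce) (proj1 Cf)).
  have [_ le_a'f] := cs_acq_before Cf fT'.
  case: (cs_disjoint ay ay' neq_aa' Ce Cf eT' fT') => [[rT' lt_ra']|[r'T' lt_r'a]].
  + split=> //; lia.
  + have [_ le_ae] := cs_acq_before Ce eT'.
    have [_ le_fr'] := cs_rel_after Cf r'T'.
    lia.
- move=> e g f _ IH1 _ IH2 fT'.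
  have [gT' lt_gf] := IH2 fT'.
  have [eT' lt_eg] := IH1 gT'.
  split=> //; lia.
Qed.

End Reordering.

Section Accesses.
Variables (E : eqType) (tid : E -> nat) (act : E -> action).

Lemma conflicting_cases e f : conflicting tid act e f ->
  tid e <> tid f /\ exists x,
    (is_write act x e /\ is_read act x f) \/ (is_access act x e /\ is_write act x f).
Proof.
case=> neq_tid [x Hx]; split=> //; exists x.
case: Hx => [[we [rf|wf]]|[ae wf]]; [by left|right|by right].
by split=> //; right.
Qed.

Lemma access_not_rel x y e : is_access act x e -> ~ is_rel act y e.
Proof. by rewrite /is_rel; case=> ->. Qed.

Lemma initial_write_last_write T r x : initial_write act T ->
  r \in T -> is_read act x r -> exists w, last_write act T w r.
Proof.
move=> IW rT rx; case/splitPr: rT IW => s1 s2 IW.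
have [t1 [w [t2 [-> [wx no_w]]]]] := last_split (IW s1 r s2 x erefl rx).
by exists w, x; split=> //; split=> //; exists t1, t2, s2; rewrite -catA.
Qed.

Lemma pwr_last_rule T e f : pwr tid act T e f ->
  [\/ tid e = tid f, last_write act T e f, (exists y, is_rel act y e)
    | exists g, pwr tid act T e g /\ pwr tid act T g f].
Proof.
case=> [e0 f0 _ _ Htid _|w r LW|y a r a' r' e0 f0 _ _ _ [M _] _ _|e0 g f0 H1 H2].
- exact: Or41.
- exact: Or42.
- by case: M => _ [y0 [_ [ry _]]]; apply: Or43; exists y0.
- by apply: Or44; exists g.
Qed.

End Accesses.

Section AdjacentPair.
Variables (E : eqType) (tid : E -> nat) (act : E -> action) (T T' : seq E).
Variables (s1 s2 : seq E) (e f : E).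
Hypothesis uniq_T : uniq T.
Hypothesis reorder : correct_reordering tid act T T'.
Hypothesis adjacent : T' = s1 ++ e :: f :: s2.

Let uniq_T' : uniq T' := reordering_uniq uniq_T reorder.

Lemma adjacent_index : [/\ e \in T', f \in T' & index f T' = (index e T').+1].
Proof.
have ie := index_pivot_uniq uniq_T' adjacent.
have if' : index f T' = size (s1 ++ [:: e]).
  by apply: (index_pivot_uniq (s2 := s2) uniq_T'); rewrite adjacent -catA.
by rewrite ie if' size_cat addn1 adjacent !(mem_cat, inE) !eqxx !orbT.
Qed.

Lemma adjacent_not_pwr_back : ~ pwr tid act T f e.
Proof.
have [eT' _ idx_f] := adjacent_index.
by move=> /(pwr_sound uniq_T reorder) /(_ eT') [_]; lia.
Qed.

Lemma adjacent_nothing_between : ~ exists g, pwr tid act T e g /\ pwr tid act T g f.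
Proof.
have [_ fT' idx_f] := adjacent_index.
case=> g [Heg Hgf].
have [gT' lt_gf] := pwr_sound uniq_T reorder Hgf fT'.
have [_ lt_eg] := pwr_sound uniq_T reorder Heg gT'.
lia.
Qed.

(* Adjacent events of different threads, the first not a release, hold no
   common lock: their critical sections would overlap in T'. *)
Lemma adjacent_LS_disjoint : tid e <> tid f -> (forall y, ~ is_rel act y e) ->
  LS_disjoint tid act T e f.
Proof.
move=> neq_tid not_rel y [a [r [ay Ce]]] [a' [r' [ay' Cf]]].
have [eT' fT' idx_f] := adjacent_index.
have neq_aa' : a <> a'.
  move=> eq_aa'; subst a'; apply: neq_tid.
  by case: Ce => _ [_ [-> _]]; case: Cf => _ [_ [-> _]].
case: (cs_disjoint uniq_T reorder ay ay' neq_aa' Ce Cf eT' fT') => [[rT' lt_ra']|[r'T' lt_r'a]].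
- have [_ le_er] := cs_rel_after uniq_T reorder Ce rT'.
  have [_ le_a'f] := cs_acq_before uniq_T reorder Cf fT'.
  have neq_er : index e T' <> index r T'.
    move=> /(index_inj eT' rT') eq_er; subst r.
    by case: Ce => [[_ [y0 [_ [ry0 _]]]] _]; apply: (not_rel y0).
  lia.
- have [_ le_ae] := cs_acq_before uniq_T reorder Ce eT'.
  have [_ le_fr'] := cs_rel_after uniq_T reorder Cf r'T'.
  lia.
Qed.

(* A read immediately preceded in T' by a write of its variable has that
   write as its last write in T, since last writes are kept in T'. *)
Lemma adjacent_last_write x w : is_write act x e -> is_read act x f ->
  last_write act T w f -> w = e.
Proof.
move=> we rf LW.
have [_ fT' _] := adjacent_index.
case: reorder => _ [_ [keep_lw _]].
have [x' [rf' [_ [t1 [t2 [t3 [HT' no_w]]]]]]] := keep_lw f w fT' LW.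
have eq_x : x' = x by move: rf'; rewrite /is_read rf => -[].
subst x'.
have notin_pre (u v : seq E) : T' = u ++ f :: v -> forall b, b \in u -> b <> f.
  move=> H b bu bf; have := uniq_T'; rewrite H => /pivot_notin_prefix.
  by rewrite -bf bu.
have HT'e : T' = (s1 ++ [:: e]) ++ f :: s2 by rewrite adjacent -catA.
have HT'w : T' = (t1 ++ w :: t2) ++ f :: t3 by rewrite HT' -catA.
have [pre_eq _ _] := first_split_uniq (P := eq^~ f) (etrans (esym HT'e) HT'w)
  erefl erefl (notin_pre _ _ HT'e) (notin_pre _ _ HT'w).
move: pre_eq; case/lastP: t2 no_w {HT' HT'w} => [|t2 z] no_w.
- by rewrite !cats1 => /rcons_inj [_ ->].
- rewrite cats1 -rcons_cons -rcons_cat => /rcons_inj [_ eq_ez].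
  by case: (no_w z); rewrite ?mem_rcons ?mem_head // -eq_ez.
Qed.

Lemma adjacent_PWR_race : initial_write act T -> f \in T ->
  conflicting tid act e f -> PWR_race tid act T e f.
Proof.
move=> IW fT conf.
have [neq_tid [x [[we rf]|[ae wf]]]] := conflicting_cases conf.
- have not_rel y : ~ is_rel act y e by apply: (access_not_rel (x := x)); right.
  have [w LW] := initial_write_last_write IW fT rf.
  have eq_we := adjacent_last_write we rf LW; subst w.
  right; split=> //; split; first by exists x.
  split; first by exists x.
  split; first exact: adjacent_LS_disjoint.
  by split; [apply: pwr_WRD | apply: adjacent_nothing_between].
- have not_rel y : ~ is_rel act y e := access_not_rel ae.
  left; split=> //; split; first exact: adjacent_LS_disjoint.
  split.
    case/pwr_last_rule => [//|[x' [rf _]]|[y /not_rel]//|/adjacent_nothing_between//].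
    by move: rf; rewrite /is_read wf.
  split; first exact: adjacent_not_pwr_back.
  by case: ae => [re|we']; [right|left]; split; exists x.
Qed.

End AdjacentPair.

Theorem mainTheorem1 (E : eqType) (tid : E -> nat) (act : E -> action)
  (T : seq E) :
  well_formed tid act T -> initial_write act T ->
  forall e f, predictable_race tid act T e f -> PWR_race tid act T e f.
Proof.
move=> [uniq_T _] IW e f [_ [fT [conf [[T' [reorder [s1 [s2 adjacent]]]] _]]]].
exact: (adjacent_PWR_race uniq_T reorder adjacent IW fT conf).
Qed.
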